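(* Every Abel sequentially compact subset of $\mathbb{R}$ is bounded.
   Context: A sequence $(p_n)_{n\ge0}$ is Abel convergent to $\ell$ if $\sum_{k=0}^{\infty}p_k x^k$ converges for every $0\le x<1$ and $\lim_{x\to 1^-}(1-x)\sum_{k=0}^{\infty}p_k x^k=\ell$. A subset $F\subseteq\mathbb{R}$ is Abel sequentially compact if every sequence of points of $F$ has a subsequence Abel convergent to a limit belonging to $F$. *)

From Stdlib Require Import Reals.
From Coquelicot Require Import Coquelicot.
Open Scope R_scope.

Definition abel_convergent (p : nat -> R) (l : R) : Prop :=
  (forall x : R, 0 <= x < 1 -> ex_series (fun k => p k * x ^ k)) /\
  filterlim (fun x => (1 - x) * Series (fun k => p k * x ^ k))
            (at_left 1) (locally l).

Definition strictly_increasing (phi : nat -> nat) : Prop :=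
  forall n m : nat, (n < m)%nat -> (phi n < phi m)%nat.

Definition abel_seq_compact (F : R -> Prop) : Prop :=
  forall u : nat -> R, (forall n, F (u n)) ->
    exists phi : nat -> nat, strictly_increasing phi /\
      exists l : R, F l /\ abel_convergent (fun n => u (phi n)) l.

Definition bounded_set (F : R -> Prop) : Prop :=
  exists M : R, forall x : R, F x -> Rabs x <= M.

(* If F were unbounded we could pick u_n in F with |u_n| > 2^n.  Any subsequence
   still satisfies |u_(phi n)| > 2^n, so the terms of its power series at x = 1/2
   have modulus at least 1 and the series diverges, whence no subsequence is
   Abel convergent. *)

From Stdlib Require Import Reals Lra Lia Classical ClassicalEpsilon.
From Coquelicot Require Import Coquelicot.
Open Scope R_scope.

Lemma strictly_increasing_ge (phi : nat -> nat) :
  strictly_increasing phi -> forall k, (k <= phi k)%nat.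
Proof.
  intros Hphi k; induction k as [|k IH]; [lia|].
  assert (phi k < phi (S k))%nat by (apply Hphi; lia). lia.
Qed.

Lemma unbounded_pow2_seq (F : R -> Prop) :
  ~ bounded_set F -> exists u : nat -> R, forall n, F (u n) /\ 2 ^ n < Rabs (u n).
Proof.
  intros Hnb; apply (choice (fun n x => F x /\ 2 ^ n < Rabs x)); intro n.
  apply NNPP; intro Hn; apply Hnb; exists (2 ^ n); intros x Fx.
  apply Rnot_lt_le; intro Hlt; apply Hn; now exists x.
Qed.

Lemma pow_growth_subseq (u : nat -> R) (phi : nat -> nat) (c : R) :
  1 <= c -> strictly_increasing phi -> (forall n, c ^ n < Rabs (u n)) ->
  forall n, c ^ n <= Rabs (u (phi n)).
Proof.
  intros Hc Hphi Hu n.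
  apply Rle_trans with (c ^ phi n).
  - apply Rle_pow; [exact Hc | now apply strictly_increasing_ge].
  - now apply Rlt_le.
Qed.

Lemma not_ex_series_pow_growth (p : nat -> R) (x : R) :
  0 < x -> (forall n, (/ x) ^ n <= Rabs (p n)) ->
  ~ ex_series (fun k => p k * x ^ k).
Proof.
  intros Hx Hp Hs.
  apply ex_series_lim_0, is_lim_seq_spec in Hs.
  destruct (Hs (mkposreal 1 Rlt_0_1)) as [N HN].
  specialize (HN N (le_n N)); simpl in HN.
  rewrite Rminus_0_r, Rabs_mult, <- RPow_abs, (Rabs_pos_eq x) in HN by lra.
  assert (Hone : (/ x) ^ N * x ^ N = 1).
  { rewrite <- Rpow_mult_distr, Rinv_l by lra. apply pow1. }
  assert ((/ x) ^ N * x ^ N <= Rabs (p N) * x ^ N).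
  { apply Rmult_le_compat_r; [apply pow_le; lra | apply Hp]. }
  lra.
Qed.

Theorem theorem16 (F : R -> Prop) : abel_seq_compact F -> bounded_set F.
Proof.
  intros HF; apply NNPP; intro Hnb.
  destruct (unbounded_pow2_seq F Hnb) as [u Hu].
  destruct (HF u (fun n => proj1 (Hu n))) as [phi [Hphi [l [_ [Hser _]]]]].
  apply (not_ex_series_pow_growth (fun n => u (phi n)) (/ 2)); [lra | | apply Hser; lra].
  intro n; rewrite Rinv_inv.
  apply (pow_growth_subseq u phi 2); [lra | exact Hphi | intro k; apply Hu].
Qed.
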